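(* Let $x_1,\dots,x_n\in\mathbb{R}^p$, let $u_1,\dots,u_s$ be points chosen from $\{x_1,\dots,x_n\}$, and let $k$ be a nonnegative base kernel such that all normalizing sums below are positive. For $1\le j\le s$ let $n_j$ be the number of $x_i$ whose nearest induced point is $u_j$. Define for $1\le i\le n$, $1\le j\le s$: $$A_{ij}=\frac{n_jk(x_i,u_j)}{\sum_{q=1}^nk(x_q,u_j)\sum_{q=1}^sn_qk(x_i,u_q)},\qquad Z_{ij}=\frac{A_{ij}}{\sum_{l=1}^sA_{il}},$$ let $\Lambda$ be the $s\times s$ diagonal matrix with $\Lambda_{jj}=\sum_{i=1}^nZ_{ij}$, and $L=I-(Z\Lambda^{-1}Z^\top)^{1/2}$ (with the positive semidefinite square root). Then the eigenvalues of $L$ are real and lie in $[0,1]$; in particular $0$ is the smallest eigenvalue of $L$. *)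

From HB Require Import structures.
From mathcomp Require Import all_boot all_order all_algebra.
From mathcomp Require Import reals.
From mathcomp Require Export complex.
Set Implicit Arguments. Unset Strict Implicit. Unset Printing Implicit Defensive.
Import Order.TTheory GRing.Theory Num.Theory.
Local Open Scope ring_scope.

Section Defs.
Variables (R : realType) (n p s : nat).
Variables (x : 'I_n -> 'rV[R]_p) (c : 'I_s -> 'I_n) (k : 'rV[R]_p -> 'rV[R]_p -> R).

Definition edist (a b : 'rV[R]_p) : R := Num.sqrt (\sum_(t < p) (a 0 t - b 0 t) ^+ 2).

Definition ind (j : 'I_s) : 'rV[R]_p := x (c j).

(* u_j is the nearest induced point of x_i (ties broken by smallest index j) *)
Definition is_nearest (i : 'I_n) (j : 'I_s) : bool :=
  [forall l : 'I_s, edist (x i) (ind j) <= edist (x i) (ind l)] &&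
  [forall l : 'I_s, (l < j)%N ==> (edist (x i) (ind j) < edist (x i) (ind l))].

Definition ncount (j : 'I_s) : nat := #|[set i | is_nearest i j]|.

Definition Amx : 'M[R]_(n, s) := \matrix_(i, j)
  ((ncount j)%:R * k (x i) (ind j) /
   ((\sum_(q < n) k (x q) (ind j)) * (\sum_(q < s) (ncount q)%:R * k (x i) (ind q)))).

Definition Zmx : 'M[R]_(n, s) := \matrix_(i, j) (Amx i j / \sum_(l < s) Amx i l).

Definition Lam : 'M[R]_s := diag_mx (\row_j \sum_(i < n) Zmx i j).

Definition Mmx : 'M[R]_n := Zmx *m invmx Lam *m Zmx^T.
End Defs.

Definition psd_sqrt (R : realType) (m : nat) (M S : 'M[R]_m) : Prop :=
  S^T = S /\ (forall v : 'cV[R]_m, 0 <= (v^T *m S *m v) 0 0) /\ S *m S = M.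

(* M = Z Λ^-1 Z^T is a symmetric positive semidefinite contraction: since the
   rows of Z are probability vectors and Λ collects the column sums of Z,
   v^T M v = Σ_j (Σ_i Z_ij v_i)^2 / Λ_jj <= Σ_j Σ_i Z_ij v_i^2 = v^T v by
   Jensen's inequality for the weights Z_.j / Λ_jj.  Moreover M 1 = 1.
   Diagonalizing M over the reals gives a positive semidefinite square root S
   whose eigenvalues lie in [0, 1] (S >= 0 and S^2 <= I), so those of I - S do
   too; and S 1 = 1 because (S + I)(S 1 - 1) = S^2 1 - 1 = 0 with S + I
   positive definite, so 0 is an eigenvalue of I - S. *)
From HB Require Import structures.
From mathcomp Require Import all_boot all_order all_algebra.
From mathcomp Require Import reals complex.
From mathcomp Require Import ring lra.
Import Order.TTheory GRing.Theory Num.Theory.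
Local Open Scope ring_scope.
Set Implicit Arguments. Unset Strict Implicit. Unset Printing Implicit Defensive.

Definition psdmx (R : numDomainType) n (A : 'M[R]_n) :=
  forall v : 'cV[R]_n, 0 <= (v^T *m A *m v) 0 0.

Section Diagonalized.
Variables (F : fieldType) (n : nat).
Implicit Types (A P X : 'M[F]_n) (d : 'rV[F]_n).

Lemma diagonalized_row_eigen P A d j : P *m A = diag_mx d *m P ->
  row j P *m A = d 0 j *: row j P.
Proof.
by move=> PA; rewrite -row_mul PA mul_diag_mx; apply/rowP => l; rewrite !mxE.
Qed.

Lemma unitmx_row_neq0 P j : P \in unitmx -> row j P != 0.
Proof.
move=> Pu; apply: contraTneq isT => Pj0.
have /rowP/(_ j) := congr1 (mulmx^~ (invmx P)) Pj0.
by rewrite -row_mul mulmxV // mul0mx !mxE eqxx => /eqP; rewrite oner_eq0.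
Qed.

Lemma diagonalized_eigenvalue P A d a :
  P \in unitmx -> P *m A = diag_mx d *m P -> eigenvalue A a ->
  exists j, a = d 0 j.
Proof.
move=> Pu PA /eigenvalueP [v vA v_neq0].
pose w := v *m invmx P.
have vE : v = w *m P by rewrite mulmxKV.
have wd : w *m diag_mx d = a *: w.
  apply: (can_inj (mulmxK Pu)).
  by rewrite -mulmxA -PA mulmxA -vE vA -scalemxAl -vE.
clearbody w; have [j wj] : exists j, w 0 j != 0.
  apply/existsP; apply: contraNT v_neq0; rewrite negb_exists => /forallP wj0.
  suff w_eq0 : w = 0 by rewrite vE w_eq0 mul0mx.
  by apply/rowP => j; rewrite mxE; apply/eqP/negPn/wj0.
exists j; apply: (mulIf wj).
by move/rowP: wd => /(_ j); rewrite mul_mx_diag !mxE mulrC => <-.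
Qed.

Lemma diag_intertwine_map (g : F -> F) X d d' :
  X *m diag_mx d = diag_mx d' *m X ->
  X *m diag_mx (map_mx g d) = diag_mx (map_mx g d') *m X.
Proof.
move=> /matrixP Xd; apply/matrixP => i j; have := Xd i j.
rewrite !mul_mx_diag !mul_diag_mx !mxE => Xij.
have [->|Xij_neq0] := eqVneq (X i j) 0; first by rewrite mul0r mulr0.
suff -> : d 0 j = d' 0 i by rewrite mulrC.
by apply: (mulfI Xij_neq0); rewrite Xij mulrC.
Qed.

(* Functional calculus on diagonalizable matrices is well defined. *)
Lemma diag_conj_map (g : F -> F) P Q d d' :
  P \in unitmx -> Q \in unitmx ->
  invmx P *m diag_mx d *m P = invmx Q *m diag_mx d' *m Q ->
  invmx P *m diag_mx (map_mx g d) *m P = invmx Q *m diag_mx (map_mx g d') *m Q.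
Proof.
move=> Pu Qu PQ; pose X := Q *m invmx P.
have Xd : X *m diag_mx d = diag_mx d' *m X.
  have := congr1 (fun Y => Q *m Y *m invmx P) PQ.
  by rewrite !mulmxA mulmxV // mul1mx mulmxK // -!mulmxA.
have := congr1 (fun Y => invmx Q *m Y *m P) (diag_intertwine_map g Xd).
by rewrite !mulmxA mulVmx // mul1mx mulmxKV // => ->; rewrite mulmxK.
Qed.

Lemma diag_conjM P d d' : P \in unitmx ->
  (invmx P *m diag_mx d *m P) *m (invmx P *m diag_mx d' *m P) =
  invmx P *m diag_mx (\row_j (d 0 j * d' 0 j)) *m P.
Proof. by move=> Pu; rewrite !mulmxA mulmxK // -mulmx_diag !mulmxA. Qed.

End Diagonalized.

Section RealSymmetric.
Variables (R : rcfType) (n : nat).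
Implicit Types (A P S : 'M[R]_n) (d : 'rV[R]_n).

Lemma symmetric_diagonalizable A : A^T = A ->
  exists2 P, P \in unitmx & exists d, P *m A = diag_mx d *m P.
Proof.
move=> Asym; pose rc := real_complex R; pose AC := map_mx rc A.
have ACreal : AC \is a realmx.
  by apply/mxOverP => i j; rewrite mxE; apply/complex_realP; eexists.
have ACherm : AC \is hermsymmx.
  apply: realsym_hermsym ACreal.
  apply/is_hermitianmxP.
  by rewrite expr0 scale1r map_mx_id // /AC map_trmx Asym.
have ACdiag := orthomx_spectralP (hermitian_normalmx ACherm).
have dreal := hermitian_spectral_diag_real ACherm.
have ACsim : similar_in unitmx AC (diag_mx (spectral_diag AC)).
  exists (spectralmx AC); first exact: spectral_unit.
  apply/similarP; first exact: spectral_unit.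
  by rewrite [X in _ *m X = _]ACdiag !mulmxA mulmxV ?spectral_unit // mul1mx.
have [] := real_similar ACsim ACreal.
  by apply/mxOverP => i j; rewrite mxE; case: eqP => _;
    rewrite ?mulr1n ?mulr0n ?(mxOverP dreal) ?real0.
move=> Q /andP [Qreal Qu] /(similarP Qu) QAC.
pose re m (M : 'M[R[i]]_(m, n)) := map_mx (@complex.Re R) M.
have reK m (M : 'M_(m, n)) : M \is a realmx -> map_mx rc (re _ M) = M.
  by move=> /mxOverP Mreal; apply/matrixP => i j; rewrite !mxE /rc RRe_real.
exists (re _ Q); first by rewrite -(map_unitmx rc) reK.
exists (re _ (spectral_diag AC)); apply: (@map_mx_inj _ _ rc).
by rewrite !map_mxM map_diag_mx !reK.
Qed.

Lemma mulmx_tr_ge0 m (u : 'rV[R]_m) : 0 <= (u *m u^T) 0 0.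
Proof. by rewrite mxE; apply: sumr_ge0 => i _; rewrite mxE -expr2 sqr_ge0. Qed.

Lemma mulmx_tr_gt0 m (u : 'rV[R]_m) : u != 0 -> 0 < (u *m u^T) 0 0.
Proof.
rewrite lt_def mulmx_tr_ge0 andbT; apply: contraNneq => u0.
apply/eqP/rowP => i; rewrite mxE; apply/eqP; rewrite -sqrf_eq0.
move: u0; rewrite mxE => /eqP; rewrite psumr_eq0 => [/allP/(_ i)|l _].
  by rewrite mem_index_enum !mxE -expr2 => /(_ isT)/implyP/(_ isT).
by rewrite mxE -expr2 sqr_ge0.
Qed.

Lemma psdmx_tr_mulmx m (B : 'M[R]_(m, n)) : psdmx (B^T *m B).
Proof.
by move=> v; rewrite mulmxA -trmx_mul -mulmxA -{2}(trmxK (B *m v)) mulmx_tr_ge0.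
Qed.

Lemma diagonalized_quad_form A P d j : P *m A = diag_mx d *m P ->
  (row j P *m A *m (row j P)^T) 0 0 = d 0 j * (row j P *m (row j P)^T) 0 0.
Proof. by move=> PA; rewrite (diagonalized_row_eigen j PA) -scalemxAl mxE. Qed.

Lemma psd_diagonalized_ge0 A P d j : psdmx A ->
  P \in unitmx -> P *m A = diag_mx d *m P -> 0 <= d 0 j.
Proof.
move=> Apsd Pu PA; have := Apsd (row j P)^T.
rewrite trmxK (diagonalized_quad_form j PA) pmulr_lge0 //.
by rewrite mulmx_tr_gt0 // unitmx_row_neq0.
Qed.

(* S is built as T^2 for the symmetric fourth root T of A, which makes it
   positive semidefinite by construction. *)
Lemma psd_sqrt_exists A : A^T = A -> psdmx A ->
  exists S, [/\ S^T = S, psdmx S & S *m S = A].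
Proof.
move=> Asym Apsd; have [P Pu [d PA]] := symmetric_diagonalizable Asym.
have AE : A = invmx P *m diag_mx d *m P by rewrite -mulmxA -PA mulKmx.
pose root4 t := Num.sqrt (Num.sqrt t : R).
pose T := invmx P *m diag_mx (map_mx root4 d) *m P.
pose Q := invmx P^T.
have Qu : Q \in unitmx by rewrite unitmx_inv unitmx_tr.
have AQ : invmx P *m diag_mx d *m P = invmx Q *m diag_mx d *m Q.
  by rewrite -AE -{1}Asym {1}AE !trmx_mul tr_diag_mx trmx_inv invmxK mulmxA.
have Tsym : T^T = T.
  rewrite {2}/T (diag_conj_map root4 Pu Qu AQ) !trmx_mul tr_diag_mx invmxK.
  by rewrite trmx_inv mulmxA.
exists (T *m T); split.
- by rewrite trmx_mul Tsym.
- by rewrite -{1}Tsym; apply: psdmx_tr_mulmx.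
- rewrite !diag_conjM // AE; congr (_ *m diag_mx _ *m _); apply/rowP => j.
  have d0 := psd_diagonalized_ge0 j Apsd Pu PA.
  by rewrite !mxE -!expr2 sqr_sqrtr ?sqrtr_ge0 // sqr_sqrtr.
Qed.

Lemma psd_contraction_diagonalized S P e j : psdmx S ->
  (forall v : 'cV_n, (v^T *m (S *m S) *m v) 0 0 <= (v^T *m v) 0 0) ->
  P \in unitmx -> P *m S = diag_mx e *m P -> 0 <= e 0 j <= 1.
Proof.
move=> Spsd SSle Pu PS; have e0 := psd_diagonalized_ge0 j Spsd Pu PS.
rewrite e0 -(@expr_le1 _ 2) //.
have PSS : P *m (S *m S) = diag_mx (\row_l (e 0 l ^+ 2)) *m P.
  by rewrite mulmxA PS -mulmxA PS mulmxA mulmx_diag; congr (diag_mx _ *m _);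
    apply/rowP => l; rewrite !mxE expr2.
have := SSle (row j P)^T; rewrite trmxK (diagonalized_quad_form j PSS) mxE.
by rewrite ger_pMl ?mulmx_tr_gt0 ?unitmx_row_neq0.
Qed.

(* S + 1 is positive definite and kills S o - o. *)
Lemma psd_sqr_fixed S (o : 'cV[R]_n) : S^T = S -> psdmx S ->
  S *m S *m o = o -> S *m o = o.
Proof.
move=> Ssym Spsd SSo; pose w := S *m o - o.
have Sw : S *m w = - w.
  by rewrite mulmxBr mulmxA SSo opprB.
have : (w^T *m S *m w) 0 0 + (w^T *m w) 0 0 = 0.
  by rewrite -mulmxA Sw mulmxN [X in X + _]mxE addNr.
have ww_ge0 : 0 <= (w^T *m w) 0 0 by rewrite -{2}(trmxK w) mulmx_tr_ge0.
move/eqP; rewrite paddr_eq0 ?Spsd // => /andP [_ ww0].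
apply/eqP; rewrite -subr_eq0 -/w; apply: contraTT ww0 => w_neq0.
have wT_neq0 : w^T != 0.
  by apply: contra_neq w_neq0 => /(congr1 trmx); rewrite trmxK trmx0.
by have := mulmx_tr_gt0 wT_neq0; rewrite trmxK => /gt_eqF ->.
Qed.

Lemma root_char_one_sub_psd_contraction S z : S^T = S -> psdmx S ->
  (forall v : 'cV_n, (v^T *m (S *m S) *m v) 0 0 <= (v^T *m v) 0 0) ->
  root (char_poly (map_mx (real_complex R) (1%:M - S))) z ->
  exists2 r : R, z = real_complex R r & 0 <= r <= 1.
Proof.
move=> Ssym Spsd SSle; pose rc := real_complex R.
have [P Pu [e PS]] := symmetric_diagonalizable Ssym.
have P1S : P *m (1%:M - S) = diag_mx (\row_j (1 - e 0 j)) *m P.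
  rewrite mulmxBr PS mulmx1 -[P in P - _]mul1mx -mulmxBl; congr (_ *m _).
  by apply/matrixP => i j; rewrite !mxE mulrnBl.
have PC1S : map_mx rc P *m map_mx rc (1%:M - S) =
            diag_mx (map_mx rc (\row_j (1 - e 0 j))) *m map_mx rc P.
  by rewrite -map_diag_mx -!map_mxM P1S.
rewrite -eigenvalue_root_char => /(diagonalized_eigenvalue _ PC1S) [|j ->].
  by rewrite map_unitmx.
exists (1 - e 0 j); first by rewrite !mxE.
by have /andP [e0 e1] := psd_contraction_diagonalized j Spsd SSle Pu PS; lra.
Qed.

End RealSymmetric.

Lemma sqr_wsum_le (R : realFieldType) m (a y : 'I_m -> R) :
  (forall i, 0 <= a i) -> 0 < \sum_i a i ->
  (\sum_i a i * y i) ^+ 2 / \sum_i a i <= \sum_i a i * y i ^+ 2.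
Proof.
move=> a_ge0 suma_gt0; set A := \sum_i a i; set Y := \sum_i a i * y i.
pose mean := Y / A.
have variance :
    \sum_i a i * y i ^+ 2 - Y ^+ 2 / A = \sum_i a i * (y i - mean) ^+ 2.
  have expand i : a i * (y i - mean) ^+ 2 =
      a i * y i ^+ 2 - (mean *+ 2) * (a i * y i) + mean ^+ 2 * a i by ring.
  rewrite (eq_bigr _ (fun i _ => expand i)) big_split sumrB /= -!mulr_sumr.
  rewrite -/A -/Y /mean.
  by field; rewrite gt_eqF.
rewrite -subr_ge0 variance; apply: sumr_ge0 => i _.
by rewrite mulr_ge0 ?sqr_ge0.
Qed.

Section StochasticGram.
Variables (R : realFieldType) (n s : nat) (Z : 'M[R]_(n, s)).
Hypothesis Z_ge0 : forall i j, 0 <= Z i j.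
Hypothesis Z_rowsum : forall i, \sum_j Z i j = 1.
Hypothesis Z_colsum_gt0 : forall j, 0 < \sum_i Z i j.

Let D : 'M[R]_s := diag_mx (\row_j (\sum_i Z i j)^-1).
Let M := Z *m D *m Z^T.

Lemma stochastic_gram_sym : M^T = M.
Proof. by rewrite !trmx_mul trmxK tr_diag_mx mulmxA. Qed.

Lemma stochastic_gram_quad_form (v : 'cV[R]_n) :
  (v^T *m M *m v) 0 0 = \sum_j (\sum_i Z i j * v i 0) ^+ 2 / \sum_i Z i j.
Proof.
rewrite -!mulmxA mulmxA -[v^T *m Z]trmxK trmx_mul trmxK mxE.
apply: eq_bigr => j _; rewrite /D mul_diag_mx !mxE mulrCA -expr2 mulrC.
by congr (_ ^+ 2 / _); apply: eq_bigr => i _; rewrite mxE.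
Qed.

Lemma stochastic_gram_psd : psdmx M.
Proof.
move=> v; rewrite stochastic_gram_quad_form; apply: sumr_ge0 => j _.
by rewrite divr_ge0 ?sqr_ge0 ?ltW.
Qed.

Lemma stochastic_gram_contraction (v : 'cV[R]_n) :
  (v^T *m M *m v) 0 0 <= (v^T *m v) 0 0.
Proof.
rewrite stochastic_gram_quad_form.
apply: le_trans (_ : \sum_j \sum_i Z i j * v i 0 ^+ 2 <= _).
  by apply: ler_sum => j _; apply: sqr_wsum_le.
rewrite exchange_big mxE; apply: ler_sum => i _.
by rewrite -mulr_suml Z_rowsum mul1r !mxE expr2.
Qed.

Lemma stochastic_gram_const1 : M *m (const_mx 1 : 'cV_n) = const_mx 1.
Proof.
have ZT1 : Z^T *m (const_mx 1 : 'cV_n) = \col_j \sum_i Z i j.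
  by apply/colP => j; rewrite !mxE; apply: eq_bigr => i _; rewrite !mxE mulr1.
have DZT1 : D *m \col_j \sum_i Z i j = const_mx 1.
  by apply/colP => j; rewrite mul_diag_mx !mxE mulVf ?gt_eqF.
apply/colP => i; rewrite -!mulmxA ZT1 DZT1 !mxE -[RHS](Z_rowsum i).
by apply: eq_bigr => j _; rewrite !mxE mulr1.
Qed.

End StochasticGram.

Section InducedPointAffinity.
Variables (R : realType) (n p s : nat).
Variables (x : 'I_n -> 'rV[R]_p) (c : 'I_s -> 'I_n).
Variable k : 'rV[R]_p -> 'rV[R]_p -> R.
Hypothesis k_ge0 : forall a b, 0 <= k a b.

Lemma Amx_ge0 i j : 0 <= Amx x c k i j.
Proof.
rewrite /Amx mxE divr_ge0 ?mulr_ge0 ?sumr_ge0 // => q _.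
by rewrite mulr_ge0.
Qed.

Lemma Zmx_ge0 i j : 0 <= Zmx x c k i j.
Proof.
by rewrite /Zmx mxE divr_ge0 ?Amx_ge0 ?sumr_ge0 // => l _; apply: Amx_ge0.
Qed.

Lemma Zmx_rowsum i : 0 < \sum_l Amx x c k i l -> \sum_j Zmx x c k i j = 1.
Proof.
move=> sumA_gt0; under eq_bigr => j _ do rewrite /Zmx mxE.
by rewrite -mulr_suml mulfV ?gt_eqF.
Qed.

Lemma invmx_Lam : (forall j, 0 < \sum_i Zmx x c k i j) ->
  invmx (Lam x c k) = diag_mx (\row_j (\sum_i Zmx x c k i j)^-1).
Proof.
move=> sumZ_gt0; set D := diag_mx _.
have LD : Lam x c k *m D = 1%:M.
  rewrite mulmx_diag -diag_const_mx; congr diag_mx; apply/rowP => j.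
  by rewrite !mxE mulfV ?gt_eqF.
have [Lu _] := mulmx1_unit LD.
by rewrite -[D](mulKmx Lu) LD mulmx1.
Qed.

End InducedPointAffinity.

Theorem proposition1 (R : realType) (n p s : nat)
  (x : 'I_n -> 'rV[R]_p) (c : 'I_s -> 'I_n) (k : 'rV[R]_p -> 'rV[R]_p -> R) :
  (0 < n)%N -> (0 < s)%N ->
  (forall a b, 0 <= k a b) ->
  (forall j, 0 < \sum_(q < n) k (x q) (ind x c j)) ->
  (forall i, 0 < \sum_(q < s) (ncount x c q)%:R * k (x i) (ind x c q)) ->
  (forall i, 0 < \sum_(l < s) Amx x c k i l) ->
  (forall j, 0 < \sum_(i < n) Zmx x c k i j) ->
  (exists S, psd_sqrt (Mmx x c k) S) /\
  (forall S : 'M[R]_n, psd_sqrt (Mmx x c k) S ->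
     let L := 1%:M - S in
     (forall z : R[i], root (char_poly (map_mx (real_complex R) L)) z ->
        exists2 r : R, z = real_complex R r & 0 <= r <= 1) /\
     eigenvalue L 0).
Proof.
move=> n_gt0 _ k_ge0 _ _ sumA_gt0 sumZ_gt0; set Z := Zmx x c k.
have Z_ge0 i j : 0 <= Z i j by apply: Zmx_ge0.
have Z_rowsum i : \sum_j Z i j = 1 by apply: Zmx_rowsum.
have M_gram : Mmx x c k = Z *m diag_mx (\row_j (\sum_i Z i j)^-1) *m Z^T.
  by rewrite /Mmx invmx_Lam.
split.
  have [S [Ssym Spsd SS]] :=
    psd_sqrt_exists (stochastic_gram_sym Z) (stochastic_gram_psd sumZ_gt0).
  by exists S; rewrite M_gram.
move=> S [Ssym [Spsd SS]] L; split.
  move=> z; apply: root_char_one_sub_psd_contraction => // v.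
  by rewrite SS M_gram (stochastic_gram_contraction Z_ge0 Z_rowsum sumZ_gt0).
have S1 : S *m (const_mx 1 : 'cV_n) = const_mx 1.
  apply: psd_sqr_fixed => //.
  by rewrite SS M_gram (stochastic_gram_const1 Z_rowsum sumZ_gt0).
apply/eigenvalueP; exists (const_mx 1); last first.
  by apply/eqP => /rowP /(_ (Ordinal n_gt0)) /eqP; rewrite !mxE oner_eq0.
rewrite scale0r mulmxBr mulmx1 -[_ *m S]trmxK trmx_mul Ssym trmx_const S1.
by rewrite trmx_const subrr.
Qed.
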